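(* Let $\alpha\in(0,1)$ and let $U_i,U_i^0$, $i\in[m]$, be real numbers. Define $G_i=\mathrm{sign}(U_i^0-U_i)\cdot[\exp(-U_i)\vee\exp(-U_i^0)]$, $$\tau=\inf\Big\{\lambda\in\{|G_i|\}_{i=1}^m:\frac{1+\sum_{i=1}^m\mathbb{I}(G_i\le-\lambda)}{\sum_{i=1}^m\mathbb{I}(G_i\ge\lambda)}\le\alpha\Big\}$$ (with $\tau=\infty$ if the set is empty), $\mathcal{R}=\{i\in[m]:G_i\ge\tau\}$, and $e_i=\frac{m\,\mathbb{I}(G_i\ge\tau)}{1+\sum_{j=1}^m\mathbb{I}(G_j\le-\tau)}$. Let $e_{(1)}\ge\cdots\ge e_{(m)}$ be the order statistics of the $e_i$, $\hat k=\max\{i:ie_{(i)}/m\ge1/\alpha\}$, and $\mathcal{R}_{ebh}=\{i\in[m]:e_i\ge e_{(\hat k)}\}$ (the $e$-BH rejection set). Then $\mathcal{R}_{ebh}=\mathcal{R}$. *)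

From HB Require Import structures.
From mathcomp Require Import all_boot all_order all_algebra.
From mathcomp Require Import classical_sets reals ereal sequences exp.
Set Implicit Arguments. Unset Strict Implicit. Unset Printing Implicit Defensive.
Import Order.TTheory GRing.Theory Num.Theory.
Local Open Scope ring_scope.

Definition Gstat (R : realType) (m : nat) (U U0 : 'I_m -> R) (i : 'I_m) : R :=
  Num.sg (U0 i - U i) * Num.max (expR (- U i)) (expR (- U0 i)).

Definition Nneg (R : realType) (m : nat) (G : 'I_m -> R) (lam : R) : nat :=
  #|[set i | G i <= - lam]|.
Definition Npos (R : realType) (m : nat) (G : 'I_m -> R) (lam : R) : nat :=
  #|[set i | lam <= G i]|.

(* the condition (1 + #neg)/#pos <= alpha; a zero denominator makes the
   ratio +oo, so the condition fails in that case *)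
Definition tau_cond (R : realType) (m : nat) (alpha : R) (G : 'I_m -> R)
    (lam : R) : bool :=
  (0 < Npos G lam)%N &&
  (((1 + Nneg G lam)%:R / (Npos G lam)%:R) <= alpha).

Definition tau (R : realType) (m : nat) (alpha : R) (G : 'I_m -> R) : \bar R :=
  ereal_inf
    [set (`|G i|)%:E | i in [set i : 'I_m | tau_cond alpha G `|G i| ]]%classic.

Definition rejset (R : realType) (m : nat) (alpha : R) (G : 'I_m -> R)
    : {set 'I_m} :=
  [set i | (tau alpha G <= (G i)%:E)%E].

Definition evalue (R : realType) (m : nat) (alpha : R) (G : 'I_m -> R)
    (i : 'I_m) : R :=
  (m * ((tau alpha G <= (G i)%:E)%E : nat))%:R /
  (1 + #|[set j | ((G j)%:E <= - tau alpha G)%E]|)%:R.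

(* order statistic e_(k), k = 1..m, with e_(1) >= ... >= e_(m) *)
Definition ord_stat (R : realType) (m : nat) (e : 'I_m -> R) (k : nat) : R :=
  nth 0 (sort (fun x y : R => y <= x) [seq e i | i <- enum 'I_m]) k.-1.

(* khat = max { k in [m] : k e_(k) / m >= 1/alpha }, with khat = 0 if empty *)
Definition khat (R : realType) (m : nat) (alpha : R) (e : 'I_m -> R) : nat :=
  \max_(k < m.+1 | (0 < k)%N && (1 / alpha <= k%:R * ord_stat e k / m%:R)) k.

Definition ebh (R : realType) (m : nat) (alpha : R) (e : 'I_m -> R)
    : {set 'I_m} :=
  if khat alpha e == 0%N then finset.set0
  else [set i | ord_stat e (khat alpha e) <= e i].

From HB Require Import structures.
From mathcomp Require Import all_boot all_order all_algebra.
From mathcomp Require Import classical_sets reals ereal sequences exp.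
Import Order.TTheory GRing.Theory Num.Theory.
Local Open Scope ring_scope.

(* Every e-value is 0 or the common value c = m / (1 + #{j : G_j <= -tau}),
   the latter exactly on R.  Sorted decreasingly they read c (|R| times)
   followed by zeros, so k e_(k) / m grows with k up to |R| and vanishes
   beyond: khat is |R| if |R| c / m >= 1/alpha and 0 otherwise.  When tau is
   finite it is the minimum of the admissible |G_i|, and its admissibility
   (1 + #neg) / #pos <= alpha is literally |R| c / m >= 1/alpha; when tau is
   infinite R is empty. *)

Lemma sort_ge_indicator {R : realDomainType} {T : eqType} (b : pred T)
    (c : R) (s : seq T) : 0 <= c ->
  sort (fun x y : R => y <= x) [seq (if b i then c else 0) | i <- s]
  = nseq (count b s) c ++ nseq (count (predC b) s) 0.
Proof.
move=> c_ge0; have ge_trans : transitive (fun x y : R => y <= x).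
  by move=> x y z yx zy; exact: le_trans zy yx.
apply: (sorted_eq ge_trans).
- by move=> x y /andP[xy yx]; apply/le_anti; rewrite xy yx.
- by apply: sort_sorted => x y; exact: le_total.
- have pairwise_nseq n (x : R) : pairwise (fun x y : R => y <= x) (nseq n x).
    by elim: n => //= n ->; rewrite all_nseq lexx orbT.
  rewrite (sorted_pairwise ge_trans) pairwise_cat /allrel !all_nseq /= all_nseq.
  by rewrite c_ge0 !pairwise_nseq !orbT.
- have s_perm : perm_eq s ([seq i <- s | b i] ++ [seq i <- s | predC b i]).
    by rewrite perm_sym perm_filterC.
  rewrite perm_sort (perm_trans (perm_map _ s_perm)) // map_cat -!size_filter.
  have map_const (t : seq T) (y : R) : [seq y | _ <- t] = nseq (size t) y.
    by elim: t => //= i t ->.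
  rewrite -!map_const; apply: perm_cat; apply/permP => p; congr (count p _);
    apply/eq_in_map => i; rewrite mem_filter /= => /andP[bi _];
    by rewrite ?bi ?(negbTE bi).
Qed.

Lemma count_enum {T : finType} (A : {pred T}) : count (fun i => i \in A) (enum T) = #|A|.
Proof. by rewrite enumT cardE /enum_mem size_filter. Qed.

Section IndicatorEvalues.

Context {R : realType} {m : nat} {A : {set 'I_m}} {c : R} {e : 'I_m -> R}.
Hypothesis e_indicator : forall i, e i = if i \in A then c else 0.

Lemma ord_stat_indicator k : 0 <= c -> (0 < k)%N ->
  ord_stat e k = if (k <= #|A|)%N then c else 0.
Proof.
case: k => // k c_ge0 _; rewrite /ord_stat (eq_map e_indicator).
rewrite (sort_ge_indicator (fun i => i \in A)) // count_enum.
by rewrite nth_cat size_nseq !nth_nseq if_same /=; case: ltnP.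
Qed.

Lemma khat_indicator (alpha : R) : 0 < alpha -> 0 <= c ->
  khat alpha e = if (0 < #|A|)%N && (1 / alpha <= #|A|%:R * c / m%:R)
                 then #|A| else 0%N.
Proof.
move=> alpha_gt0 c_ge0; have inv_alpha_gt0 : 0 < 1 / alpha by rewrite div1r invr_gt0.
set P := fun k : nat => (0 < k)%N && (1 / alpha <= k%:R * ord_stat e k / m%:R).
have P_le k : P k -> (k <= #|A|)%N.
  case/andP=> k_gt0; rewrite ord_stat_indicator //.
  by case: leqP => // _; rewrite mulr0 mul0r leNgt inv_alpha_gt0.
have P_A : P #|A| = (0 < #|A|)%N && (1 / alpha <= #|A|%:R * c / m%:R).
  by rewrite /P; case: (posnP #|A|) => [-> | A_gt0] //; rewrite ord_stat_indicator ?leqnn.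
have P_max k : P k -> P #|A|.
  move=> Pk; have k_le := P_le k Pk; case/andP: Pk => k_gt0.
  rewrite P_A ord_stat_indicator // k_le (leq_trans k_gt0 k_le) => bound.
  by apply: le_trans bound _; rewrite ler_wpM2r ?invr_ge0 ?ler0n // ler_wpM2r // ler_nat.
rewrite -P_A /khat -/P; case: ifP => PA.
  apply/eqP; rewrite eqn_leq; apply/andP; split.
    by apply/bigmax_leqP => k; exact: P_le.
  have A_lt : (#|A| < m.+1)%N by rewrite ltnS -[X in (_ <= X)%N]card_ord max_card.
  exact: (leq_bigmax_cond (Ordinal A_lt)).
by rewrite big_pred0 // => k; apply/negbTE/negP => /P_max; rewrite PA.
Qed.

Lemma ebh_indicator (alpha : R) : 0 < alpha -> 0 < c ->
  ebh alpha e = if (0 < #|A|)%N && (1 / alpha <= #|A|%:R * c / m%:R)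
                then A else finset.set0.
Proof.
move=> alpha_gt0 c_gt0; rewrite /ebh (khat_indicator alpha alpha_gt0 (ltW c_gt0)).
case: andP => [[A_gt0 _] | _]; last by rewrite eqxx.
rewrite eqn0Ngt A_gt0 /= ord_stat_indicator ?leqnn ?ltW //.
by apply/setP => i; rewrite inE e_indicator; case: (i \in A); rewrite ?lexx // leNgt c_gt0.
Qed.

End IndicatorEvalues.

Lemma tau_infty_or_attained {R : realType} {m : nat} (alpha : R) (G : 'I_m -> R) :
  tau alpha G = +oo%E \/
  exists2 i, tau alpha G = (`|G i|)%:E & tau_cond alpha G `|G i|.
Proof.
case: (pickP (fun i => tau_cond alpha G `|G i|)) => [i0 cond_i0 | no_cond].
- right; pose cond i := tau_cond alpha G `|G i|.
  case: (@arg_minP _ _ _ i0 cond (fun i => `|G i|) cond_i0) => i cond_i i_min.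
  exists i => //; apply/le_anti/andP; split.
    by apply: ereal_inf_lbound; exists i.
  by apply/ereal_infP => _ [j cond_j <-]; rewrite lee_fin i_min.
- left; rewrite /tau [X in ereal_inf X](_ : _ = set0%classic) ?ereal_inf0 //.
  by apply/seteqP; split => // _ [j /= cond_j _]; rewrite no_cond in cond_j.
Qed.

Lemma evalue_indicator {R : realType} {m : nat} (alpha : R) (G : 'I_m -> R) i :
  evalue alpha G i =
  if i \in rejset alpha G
  then m%:R / (1 + #|[set j | ((G j)%:E <= - tau alpha G)%E]|)%:R else 0.
Proof. by rewrite /evalue inE; case: (_ <= _)%E; rewrite ?muln1 ?muln0 ?mul0r. Qed.

Theorem proposition3 (R : realType) (m : nat) (alpha : R)
    (halpha : 0 < alpha < 1) (U U0 : 'I_m -> R) :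
  ebh alpha (evalue alpha (Gstat U U0)) = rejset alpha (Gstat U U0).
Proof.
case: m U U0 => [|m] U U0; first by apply/setP => -[].
set G := Gstat U U0; have alpha_gt0 : 0 < alpha by case/andP: halpha.
rewrite (ebh_indicator (evalue_indicator alpha G) alpha alpha_gt0); last first.
  by rewrite divr_gt0 ?ltr0n.
have [tau_oo | [i0 tau_t /andP[pos_gt0 ratio_le]]] := tau_infty_or_attained alpha G.
  have -> : rejset alpha G = finset.set0.
    by apply/setP => i; rewrite !inE tau_oo leNgt ltey.
  by rewrite cards0.
set t := `|G i0| in tau_t pos_gt0 ratio_le.
have -> : rejset alpha G = [set i | t <= G i].
  by apply/setP => i; rewrite !inE tau_t lee_fin.
have -> : [set j | ((G j)%:E <= - tau alpha G)%E] = [set j | G j <= - t].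
  by apply/setP => j; rewrite !inE tau_t -EFinN lee_fin.
rewrite -/(Npos G t) pos_gt0 -/(Nneg G t).
suff -> : 1 / alpha <= (Npos G t)%:R * (m.+1%:R / (1 + Nneg G t)%:R) / m.+1%:R by [].
rewrite [leRHS]mulrC mulrCA mulKf ?pnatr_eq0 //.
by rewrite div1r -invf_div lef_pV2 ?posrE ?divr_gt0 ?ltr0n.
Qed.
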